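(* There exists a planar graph of girth 4 that does not belong to CBU.
   Context: Let $e_1,\ldots,e_d$ be the standard basis of $\mathbb{R}^d$. For $d\ge 1$, a graph belongs to $d$-CBU if one can assign to each vertex an axis-parallel box (product of $d$ closed intervals of positive length) in $\mathbb{R}^d$ such that the boxes have pairwise disjoint interiors, two distinct vertices are adjacent iff their boxes intersect, and any two intersecting boxes intersect in a $(d-1)$-dimensional box orthogonal to $e_1$. CBU denotes the union of the classes $d$-CBU over all $d\ge 1$. *)

From mathcomp Require Import all_boot.
From Stdlib Require Import Reals.

Set Implicit Arguments.
Unset Strict Implicit.
Unset Printing Implicit Defensive.

Definition simple_graph (n : nat) (adj : rel 'I_n) : Prop :=
  symmetric adj /\ irreflexive adj.

(* Girth 4: the shortest cycle has length 4.  A cycle of length k is a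
   duplicate-free sequence of k vertices, cyclically consecutive ones adjacent
   (path.cycle); graph cycles have length >= 3. *)
Definition girth4 (n : nat) (adj : rel 'I_n) : Prop :=
  (exists s : seq 'I_n, size s = 4%N /\ uniq s /\ cycle adj s) /\
  (forall s : seq 'I_n, uniq s -> cycle adj s -> leq 3 (size s) ->
     leq 4 (size s)).

Local Open Scope R_scope.

(* Arcs are given by two coordinate functions
   R -> R, continuous everywhere (harmless: any arc on [0,1] extends). *)
Definition planar (n : nat) (adj : rel 'I_n) : Prop :=
  exists (px py : 'I_n -> R) (gx gy : 'I_n -> 'I_n -> R -> R),
    (forall u v, px u = px v -> py u = py v -> u = v) /\
    (forall u v, adj u v -> ltn u v ->
       continuity (gx u v) /\ continuity (gy u v) /\
       gx u v 0 = px u /\ gy u v 0 = py u /\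
       gx u v 1 = px v /\ gy u v 1 = py v /\
       (forall s t, 0 <= s <= 1 -> 0 <= t <= 1 ->
          gx u v s = gx u v t -> gy u v s = gy u v t -> s = t) /\
       (forall w t, w <> u -> w <> v -> 0 <= t <= 1 ->
          ~ (gx u v t = px w /\ gy u v t = py w))) /\
    (forall u v u' v', adj u v -> ltn u v -> adj u' v' -> ltn u' v' ->
       (u, v) <> (u', v') ->
       forall s t, 0 < s < 1 -> 0 < t < 1 ->
         ~ (gx u v s = gx u' v' t /\ gy u v s = gy u' v' t)).

Definition in_box (d : nat) (lo hi x : 'I_d -> R) : Prop :=
  forall i, lo i <= x i <= hi i.
Definition in_box_interior (d : nat) (lo hi x : 'I_d -> R) : Prop :=
  forall i, lo i < x i < hi i.

(* d-CBU (coordinate 0 plays the role of e_1). *)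
Definition in_dCBU (d n : nat) (adj : rel 'I_n) : Prop :=
  exists lo hi : 'I_n -> 'I_d -> R,
    (forall v i, lo v i < hi v i) /\
    (forall u v, u <> v ->
       ~ (exists x, in_box_interior (lo u) (hi u) x /\
                    in_box_interior (lo v) (hi v) x)) /\
    (forall u v, u <> v ->
       (adj u v <-> exists x, in_box (lo u) (hi u) x /\ in_box (lo v) (hi v) x)) /\
    (forall u v, u <> v ->
       (exists x, in_box (lo u) (hi u) x /\ in_box (lo v) (hi v) x) ->
       exists (c : R) (a b : 'I_d -> R),
         (forall i : 'I_d, nat_of_ord i <> O -> a i < b i) /\
         (forall x, (in_box (lo u) (hi u) x /\ in_box (lo v) (hi v) x) <->
            (forall i : 'I_d, (nat_of_ord i = O -> x i = c) /\
                              (nat_of_ord i <> O -> a i <= x i <= b i)))).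

Definition in_CBU (n : nat) (adj : rel 'I_n) : Prop :=
  exists d : nat, leq 1 d /\ in_dCBU d adj.

From mathcomp Require Import all_boot.
From Stdlib Require Import Reals Lra.

Set Implicit Arguments.
Unset Strict Implicit.
Unset Printing Implicit Defensive.

(* In a CBU representation two adjacent boxes meet in a facet orthogonal to
   e_1, so the projections [lo v, hi v] of the boxes to the first axis abut:
   hi u = lo v or hi v = lo u.  Abutting intervals form no triangle, and when
   hi u = lo v the vertices u and v have no common abutting neighbour.  Along a
   4-cycle u x y v with hi u = lo v, either two opposite vertices get the same
   interval, or x starts and y ends at the contact point of u and v.  In the
   witness graph the 3-paths 2-8-9-1 and 0-6-7-5 rule out the degenerate cases
   of the 4-cycles 0-2-3-1 and 0-4-5-1, so (up to a mirror symmetry) 3 ends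
   and 4 starts at the contact point of 0 and 1, and their common neighbour 10
   cannot abut both. *)

Definition witness_edges : seq (nat * nat) :=
  [:: (0, 1); (0, 2); (2, 3); (1, 3); (0, 4); (4, 5); (1, 5); (0, 6); (6, 7);
      (5, 7); (2, 8); (8, 9); (1, 9); (3, 10); (4, 10)].

Definition witness_adj : rel nat :=
  fun a b => ((a, b) \in witness_edges) || ((b, a) \in witness_edges).

Definition witness : rel 'I_11 := fun u v => witness_adj u v.

Local Notation vtx k := (@Ordinal 11 k isT).

Lemma all_iota_ord n (P : pred nat) : all P (iota 0 n) -> forall i : 'I_n, P i.
Proof. by move=> /allP allP i; apply: allP; rewrite mem_iota ltn_ord. Qed.

Lemma witness_sym : symmetric witness.
Proof. by move=> u v; rewrite /witness /witness_adj orbC. Qed.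

Lemma witness_irr : irreflexive witness.
Proof.
by move=> u; apply/negbTE; apply: (all_iota_ord (P := fun a => ~~ witness_adj a a)).
Qed.

Lemma witness_triangle_free a b c : witness a b -> witness b c -> witness c a -> False.
Proof.
move=> ab bc ca; have := all_iota_ord (n := 11) (P := fun a => all (fun b => all (fun c =>
  ~~ [&& witness_adj a b, witness_adj b c & witness_adj c a]) (iota 0 11)) (iota 0 11)) isT a.
by move=> /all_iota_ord/(_ b)/all_iota_ord/(_ c)/and3P; apply.
Qed.

Lemma girth4_of_triangle_free n (adj : rel 'I_n) (s : seq 'I_n) :
  size s = 4 -> uniq s -> cycle adj s ->
  (forall a b c, adj a b -> adj b c -> adj c a -> False) -> girth4 adj.
Proof.
move=> size_s uniq_s cycle_s no_triangle; split; first by exists s.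
case=> [|a [|b [|c [|? ?]]]] //= _ /and4P[ab bc ca _] _.
by case: (no_triangle a b c).
Qed.

Lemma witness_girth4 : girth4 witness.
Proof.
exact: (@girth4_of_triangle_free _ _ [:: vtx 0; vtx 2; vtx 3; vtx 1]) witness_triangle_free.
Qed.

Local Open Scope R_scope.

Section AbuttingIntervals.

Variables (V : Type) (lo hi : V -> R).
Hypothesis lo_lt_hi : forall v, lo v < hi v.

Definition abut (u v : V) : Prop := hi u = lo v \/ hi v = lo u.
Definition same_interval (u v : V) : Prop := lo u = lo v /\ hi u = hi v.

Lemma abut_sym u v : abut u v -> abut v u.
Proof. by case=> h; [right | left]. Qed.

Lemma same_interval_abut a b c : same_interval a b -> abut c a <-> abut c b.
Proof. by case=> la ha; rewrite /abut la ha. Qed.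

Lemma no_common_abut a b c : hi a = lo b -> abut c a -> abut c b -> False.
Proof.
have := lo_lt_hi a; have := lo_lt_hi b; have := lo_lt_hi c.
by move=> ? ? ? ab [] ca [] cb; lra.
Qed.

Lemma abut_triangle_free a b c : abut a b -> abut b c -> abut c a -> False.
Proof.
case=> ab bc ca; first exact: no_common_abut ab ca (abut_sym bc).
exact: no_common_abut ab (abut_sym bc) ca.
Qed.

Lemma abut_square u x y v : hi u = lo v -> abut u x -> abut x y -> abut y v ->
  [\/ same_interval y u, same_interval x v | lo x = hi u /\ hi y = lo v].
Proof.
have := lo_lt_hi u; have := lo_lt_hi x; have := lo_lt_hi y; have := lo_lt_hi v.
move=> ? ? ? ? uv [] ux [] xy [] yv;
  first [ by apply: Or31; split; lra | by apply: Or32; split; lra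
        | by apply: Or33; split; lra | exfalso; lra ].
Qed.

End AbuttingIntervals.

Lemma abut_mirror V (lo hi : V -> R) u v :
  abut lo hi u v -> abut (fun w => - hi w) (fun w => - lo w) u v.
Proof. by case=> h; [right | left]; rewrite /= h. Qed.

Lemma Rmax_eq_Rmin a b a' b' : a < b -> a' < b' -> Rmax a a' = Rmin b b' ->
  b = a' \/ b' = a.
Proof. by rewrite /Rmax /Rmin; case: Rle_dec; case: Rle_dec; lra. Qed.

Lemma in_box_set d (lo hi x : 'I_d -> R) i t : in_box lo hi x ->
  lo i <= t <= hi i -> in_box lo hi (fun j => if j == i then t else x j).
Proof. by move=> hx ht j; case: eqP => [-> | _]. Qed.

Lemma box_contact_abut d (lu hu lv hv : 'I_d -> R) i c :
  lu i < hu i -> lv i < hv i ->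
  (exists x, in_box lu hu x /\ in_box lv hv x) ->
  (forall x, in_box lu hu x -> in_box lv hv x -> x i = c) ->
  hu i = lv i \/ hv i = lu i.
Proof.
move=> ltu ltv [x [xu xv]] flat.
have only_c t : lu i <= t <= hu i -> lv i <= t <= hv i -> t = c.
  by move=> tu tv; have := flat _ (in_box_set xu tu) (in_box_set xv tv); rewrite eqxx.
have [xui xvi] := (xu i, xv i).
have max_le_min : Rmax (lu i) (lv i) <= Rmin (hu i) (hv i).
  by apply: Rmax_lub; apply: Rmin_glb; lra.
have [[[? ?] ?] ?] := (Rmax_l (lu i) (lv i), Rmax_r (lu i) (lv i),
                       Rmin_l (hu i) (hv i), Rmin_r (hu i) (hv i)).
apply: Rmax_eq_Rmin => //.
by rewrite (only_c (Rmax (lu i) (lv i))) 1?(only_c (Rmin (hu i) (hv i))); lra.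
Qed.

Lemma in_CBU_abutting n (adj : rel 'I_n) : in_CBU adj ->
  exists lo hi : 'I_n -> R, (forall v, lo v < hi v) /\
    (forall u v, u <> v -> adj u v -> abut lo hi u v).
Proof.
case=> d [d_gt0 [lo [hi [lt_lo_hi [_ [adj_meet contact]]]]]].
pose e1 : 'I_d := Ordinal d_gt0.
exists (lo^~ e1), (hi^~ e1); split=> [v | u v uv uv_adj]; first exact: lt_lo_hi.
have meet := proj1 (adj_meet u v uv) uv_adj.
have [c [a [b [_ face]]]] := contact u v uv meet.
apply: (@box_contact_abut d (lo u) (hi u) (lo v) (hi v) e1 c) => // x xu xv.
exact: (proj1 (proj1 (face x) (conj xu xv) e1)).
Qed.

Lemma witness_not_abutting (lo hi : 'I_11 -> R) : (forall v, lo v < hi v) ->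
  ~ (forall u v, witness u v -> abut lo hi u v).
Proof.
move=> lt_lo_hi ab.
wlog h01 : lo hi lt_lo_hi ab / hi (vtx 0) = lo (vtx 1) => [mirror|].
  case: (ab (vtx 0) (vtx 1) isT) => [|h10]; first exact: mirror.
  apply: (mirror (fun w => - hi w) (fun w => - lo w)) => [v | u v uv | /=]; last by rewrite h10.
    by have := lt_lo_hi v; lra.
  exact/abut_mirror/ab.
have triangle := abut_triangle_free lt_lo_hi.
have hi3 : hi (vtx 3) = hi (vtx 0).
  have [[_ ->] // | same21 | [_ ->] //] := abut_square lt_lo_hi h01
    (ab (vtx 0) (vtx 2) isT) (ab (vtx 2) (vtx 3) isT) (ab (vtx 3) (vtx 1) isT).
  exfalso; apply: (triangle (vtx 2) (vtx 8) (vtx 9)); [exact: ab | exact: ab |].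
  exact/(same_interval_abut _ same21)/(ab (vtx 9) (vtx 1) isT).
have lo4 : lo (vtx 4) = hi (vtx 0).
  have [same50 | [-> _] // | [-> _] //] := abut_square lt_lo_hi h01
    (ab (vtx 0) (vtx 4) isT) (ab (vtx 4) (vtx 5) isT) (ab (vtx 5) (vtx 1) isT).
  exfalso; apply: (triangle (vtx 0) (vtx 6) (vtx 7)); [exact: ab | exact: ab |].
  exact/(same_interval_abut _ same50)/(ab (vtx 7) (vtx 5) isT).
apply: (no_common_abut lt_lo_hi (a := vtx 3) (b := vtx 4) (c := vtx 10)).
- by rewrite hi3 lo4.
- exact: ab.
- exact: ab.
Qed.

Lemma witness_not_CBU : ~ in_CBU witness.
Proof.
case/in_CBU_abutting=> lo [hi [lt_lo_hi ab]].
apply: (witness_not_abutting lt_lo_hi) => u v uv; apply: ab (uv) => eq_uv.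
by rewrite eq_uv witness_irr in uv.
Qed.

Definition seg (a b t : R) : R := a + t * (b - a).

Lemma continuity_seg a b : continuity (seg a b).
Proof.
apply: continuity_plus; first exact: continuity_const.
apply: continuity_mult; first exact: derivable_continuous derivable_id.
exact: continuity_const.
Qed.

Lemma seg_inj a b c d s t : a <> b \/ c <> d ->
  seg a b s = seg a b t -> seg c d s = seg c d t -> s = t.
Proof.
rewrite /seg => -[ab | cd] ac bd.
  by have /Rmult_integral[] : (s - t) * (b - a) = 0; lra.
by have /Rmult_integral[] : (s - t) * (d - c) = 0; lra.
Qed.

Definition straight_line_drawing n (adj : rel 'I_n) (px py : 'I_n -> R) : Prop :=
  [/\ forall u v, px u = px v -> py u = py v -> u = v,
      forall u v w t, adj u v -> ltn u v -> w <> u -> w <> v -> 0 <= t <= 1 ->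
        ~ (seg (px u) (px v) t = px w /\ seg (py u) (py v) t = py w)
    & forall u v u' v', adj u v -> ltn u v -> adj u' v' -> ltn u' v' ->
        (u, v) <> (u', v') -> forall s t, 0 < s < 1 -> 0 < t < 1 ->
        ~ (seg (px u) (px v) s = seg (px u') (px v') t /\
           seg (py u) (py v) s = seg (py u') (py v') t)].

Lemma planar_of_straight_line_drawing n (adj : rel 'I_n) px py :
  straight_line_drawing adj px py -> planar adj.
Proof.
case=> inj avoid cross.
exists px, py, (fun u v => seg (px u) (px v)), (fun u v => seg (py u) (py v)).
split; first exact: inj.
split=> [u v uv lt_uv | ]; last exact: cross.
have ne_uv : px u <> px v \/ py u <> py v.
  case: (Req_dec (px u) (px v)) => [eq_x|]; [right=> eq_y | by left].
  by move: lt_uv; rewrite (inj _ _ eq_x eq_y) /= ltnn.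
do 2 (split; first exact: continuity_seg).
do 4 (split; first by rewrite /seg; ring).
by split=> [s t _ _ | w t]; [exact: seg_inj | exact: avoid].
Qed.

Definition witness_x (k : nat) : R := nth 0 [:: 0; 0; -4; -4; 4; 4; 2; 3; -3; -2; 6] k.
Definition witness_y (k : nat) : R := nth 0 [:: 0; 4; 0; 4; 0; 4; 1; 2; 2; 3; 8] k.

Lemma witness_positions_inj (u v : 'I_11) :
  witness_x u = witness_x v -> witness_y u = witness_y v -> u = v.
Proof.
case: u v => [a ha] [b hb] ex ey; apply: val_inj; move: ha hb ex ey => /=.
rewrite /witness_x /witness_y.
case: a => [|[|[|[|[|[|[|[|[|[|[|a]]]]]]]]]]];
  case: b => [|[|[|[|[|[|[|[|[|[|[|b]]]]]]]]]]] //= _ _; lra.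
Qed.

Lemma witness_edge_ordered (u v : 'I_11) :
  witness u v -> ltn u v -> ((u : nat), (v : nat)) \in witness_edges.
Proof.
have ordered : all (fun e => e.1 < e.2)%nat witness_edges by [].
case/orP=> // /(allP ordered) /= vu uv.
by have := ltn_trans uv vu; rewrite ltnn.
Qed.

Ltac case_witness_edge H :=
  rewrite !inE in H; repeat (case/orP: H => H); case/eqP: H => -> ->.

Lemma witness_edges_avoid_vertices a b w t : (a, b) \in witness_edges ->
  (w < 11)%nat -> w <> a -> w <> b -> 0 <= t <= 1 ->
  ~ (seg (witness_x a) (witness_x b) t = witness_x w /\
     seg (witness_y a) (witness_y b) t = witness_y w).
Proof.
move=> ab; case_witness_edge ab;
  case: w => [|[|[|[|[|[|[|[|[|[|[|w]]]]]]]]]]] //= _ _ _ t01 [];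
  rewrite /seg /witness_x /witness_y /=; lra.
Qed.

Lemma witness_edges_disjoint a b a' b' s t :
  (a, b) \in witness_edges -> (a', b') \in witness_edges -> (a, b) <> (a', b') ->
  0 < s < 1 -> 0 < t < 1 ->
  ~ (seg (witness_x a) (witness_x b) s = seg (witness_x a') (witness_x b') t /\
     seg (witness_y a) (witness_y b) s = seg (witness_y a') (witness_y b') t).
Proof.
move=> ab ab'; case_witness_edge ab; case_witness_edge ab';
  move=> //= _ s01 t01 []; rewrite /seg /witness_x /witness_y /=; lra.
Qed.

Lemma witness_planar : planar witness.
Proof.
apply: (@planar_of_straight_line_drawing _ _ (fun u => witness_x u) (fun u => witness_y u)).
split=> [u v | u v w t uv lt_uv wu wv | u v u' v' uv lt_uv uv' lt_uv' ne s t].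
- exact: witness_positions_inj.
- apply: witness_edges_avoid_vertices (witness_edge_ordered uv lt_uv) _ _ _;
    [exact: ltn_ord | by move/ord_inj | by move/ord_inj].
- apply: witness_edges_disjoint (witness_edge_ordered uv lt_uv) (witness_edge_ordered uv' lt_uv') _.
  by case=> /ord_inj eq_u /ord_inj eq_v; apply: ne; rewrite eq_u eq_v.
Qed.

Theorem mainTheorem6 :
  exists (n : nat) (adj : rel 'I_n),
    simple_graph adj /\ planar adj /\ girth4 adj /\ ~ in_CBU adj.
Proof.
exists 11%nat, witness.
split; first exact: (conj witness_sym witness_irr).
split; first exact: witness_planar.
split; first exact: witness_girth4.
exact: witness_not_CBU.
Qed.
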